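(* Let $F$ be a differential field with derivation $\partial$ whose field of constants is an algebraically closed field $C$ of characteristic zero, and let $l\ge1$. Let $A=A_\Delta+H+N\in\mathfrak{sl}_{l+1}(F)$ with $A_\Delta=\sum_{i=1}^{l}E_{i,i+1}$, $H$ diagonal of trace zero over $F$, and $N$ strictly lower triangular over $F$. Then there exists $U\in\mathcal{U}^-(F)$ such that $UAU^{-1}+\partial(U)U^{-1}=A_\Delta+N'$ for some strictly lower triangular matrix $N'$ over $F$.
   Context: $E_{ij}$ denotes the matrix unit with $1$ at $(i,j)$. $\mathcal{U}^-(F)$ denotes the group of lower triangular unipotent $(l+1)\times(l+1)$ matrices over $F$ (the unipotent radical of the lower triangular Borel subgroup of $\mathrm{SL}_{l+1}$). In root-theoretic terms: $A\in A_\Delta+\mathbf{H}(F)\oplus\bigoplus_{\delta\in\Phi^-}\mathrm{Lie}(\mathrm{SL}_{l+1})_\delta(F)$ is transformed into $A_\Delta+\bigoplus_{\delta\in\Phi^-}\mathrm{Lie}(\mathrm{SL}_{l+1})_\delta(F)$, where $\mathbf{H}$ is the diagonal Cartan subalgebra and $\Phi^-$ the negative roots of type $A_l$ with root spaces spanned by $E_{t+1,s}$, $s\le t$. *)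

From HB Require Import structures.
From mathcomp Require Import all_boot all_order all_algebra.
Set Implicit Arguments. Unset Strict Implicit. Unset Printing Implicit Defensive.
Import GRing.Theory.
Local Open Scope ring_scope.

Definition is_derivation (F : fieldType) (d : F -> F) : Prop :=
  (forall x y : F, d (x + y) = d x + d y) /\
  (forall x y : F, d (x * y) = d x * y + x * d y).

Definition is_constant (F : fieldType) (d : F -> F) (x : F) : Prop := d x = 0.

Definition constants_alg_closed (F : fieldType) (d : F -> F) : Prop :=
  forall p : {poly F}, (forall i, is_constant d p`_i) -> (1 < size p)%N ->
    exists x : F, is_constant d x /\ root p x.

(* Characteristic zero (of F, equivalently of its constant subfield). *)
Definition char_zero (F : fieldType) : Prop := [pchar F] =i pred0.

(* A_Delta = sum_{i=1}^{l} E_{i,i+1}: ones on the superdiagonal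
   (0-indexed: entry (i,j) is 1 iff j = i+1). *)
Definition A_Delta (F : fieldType) (n : nat) : 'M[F]_n :=
  \matrix_(i < n, j < n) (if (nat_of_ord j == (nat_of_ord i).+1)%N then 1 else 0).
Arguments A_Delta : clear implicits.

Definition is_diag_trace0 (F : fieldType) (n : nat) (H : 'M[F]_n) : Prop :=
  (forall i j : 'I_n, i != j -> H i j = 0) /\ \tr H = 0.

Definition strictly_lower (F : fieldType) (n : nat) (N : 'M[F]_n) : Prop :=
  forall i j : 'I_n, (nat_of_ord i <= nat_of_ord j)%N -> N i j = 0.

Definition lower_unipotent (F : fieldType) (n : nat) (U : 'M[F]_n) : Prop :=
  (forall i j : 'I_n, (nat_of_ord i < nat_of_ord j)%N -> U i j = 0) /\
  (forall i : 'I_n, U i i = 1).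

From HB Require Import structures.
From mathcomp Require Import all_boot all_order all_algebra.
From mathcomp Require Import zify.
Set Implicit Arguments. Unset Strict Implicit. Unset Printing Implicit Defensive.
Import GRing.Theory.
Local Open Scope ring_scope.

(* Gauge by U = 1 + L, where L is subdiagonal with L_{i+1,i} = t_i := H_11 + ... + H_ii.
   Then [A_Delta, L] is the diagonal matrix with entries t_i - t_{i-1} (using t_0 = 0 and
   t_{l+1} = tr H = 0), that is [A_Delta, L] = H, and the transformed matrix becomes
   A_Delta + (N + L (H + N) + dU) U^-1, whose second summand is strictly lower triangular
   since U^-1 is lower triangular. *)

Section Derivation.
Variables (F : fieldType) (d : F -> F).
Hypothesis hd : is_derivation d.

Lemma derivation0 : d 0 = 0.
Proof. by apply: (addrI (d 0)); rewrite -hd.1 !addr0. Qed.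

Lemma derivation1 : d 1 = 0.
Proof.
have := hd.2 1 1; rewrite !mulr1 !mul1r => e.
by apply: (addrI (d 1)); rewrite addr0 -e.
Qed.

End Derivation.

Section LowerTriangular.
Variables (F : fieldType) (n : nat).
Implicit Types L M U V : 'M[F]_n.

Lemma strictly_lowerD M M' :
  strictly_lower M -> strictly_lower M' -> strictly_lower (M + M').
Proof. by move=> hM hM' i j hij; rewrite mxE hM // hM' // addr0. Qed.

Lemma strictly_lower_mul_trig M V :
  strictly_lower M -> is_trig_mx V -> strictly_lower (M *m V).
Proof.
move=> hM /is_trig_mxP hV i j hij; rewrite mxE big1 // => k _.
have [ki|ik] := ltnP k i; first by rewrite hV ?mulr0 // (leq_trans ki).
by rewrite hM ?mul0r.
Qed.

Lemma lower_unipotent_1D L : strictly_lower L -> lower_unipotent (1%:M + L).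
Proof.
move=> hL; split=> [i j ij|i]; rewrite !mxE ?hL ?addr0 ?eqxx //; last exact: ltnW.
by rewrite -val_eqE /= (ltn_eqF ij).
Qed.

Lemma lower_unipotent_unitmx U : lower_unipotent U -> U \in unitmx.
Proof.
case=> hU hU1; rewrite unitmxE det_trig; last exact/is_trig_mxP.
by rewrite big1 ?unitr1.
Qed.

(* Row [i] of [U *m invmx U = 1] determines row [i] of [invmx U] from the rows above it. *)
Lemma lower_unipotent_invmx_trig U : lower_unipotent U -> is_trig_mx (invmx U).
Proof.
move=> hU; have [hUup hU1] := hU.
have UV := mulmxV (lower_unipotent_unitmx hU).
suff Vrow m (i j : 'I_n) : val i = m -> (i < j)%N -> invmx U i j = 0.
  by apply/is_trig_mxP => i j; exact: Vrow.
elim/ltn_ind: m i j => m IH i j Hi ij; subst m.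
have := congr1 (fun M : 'M[F]_n => M i j) UV.
rewrite !mxE (bigD1 i) //= hU1 mul1r big1 ?addr0 => [->|k ki].
  by rewrite -val_eqE /= (ltn_eqF ij).
have [ik|lt_ki|/val_inj ik] := ltngtP i k.
- by rewrite hUup ?mul0r.
- by rewrite (IH k) ?mulr0 // (ltn_trans lt_ki).
- by rewrite ik eqxx in ki.
Qed.

Lemma map_derivation_lower_unipotent (d : F -> F) U :
  d 0 = 0 -> d 1 = 0 -> lower_unipotent U -> strictly_lower (map_mx d U).
Proof.
move=> d0 d1 [hUup hU1] i j; rewrite leq_eqVlt mxE => /orP[/eqP/val_inj->|ij].
  by rewrite hU1.
by rewrite hUup.
Qed.

End LowerTriangular.

Lemma big_ord_if_eqn (R : nmodType) n (m : nat) (g : 'I_n.+1 -> R) :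
  \sum_(k < n.+1) (if val k == m then g k else 0) =
  if (m < n.+1)%N then g (inord m) else 0.
Proof.
rewrite -big_mkcond /=; case: ltnP => hm.
  by rewrite (big_pred1 (inord m)) // => k; rewrite /= -val_eqE /= inordK.
by rewrite big1 // => k /eqP km; have := ltn_ord k; rewrite km ltnNge hm.
Qed.

Section Subdiagonal.
Variables (F : fieldType) (n : nat).

Definition subdiag_mx (s : nat -> F) : 'M[F]_n :=
  \matrix_(i, j) if val i == (val j).+1 then s i else 0.

Lemma subdiag_mx_strictly_lower s : strictly_lower (subdiag_mx s).
Proof. by move=> i j ij; rewrite mxE ifN // neq_ltn ltnS ij. Qed.

End Subdiagonal.

Section ShiftCommutator.
Variables (F : fieldType) (n : nat).

Lemma subdiag_mul_A_Delta (s : nat -> F) :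
  s 0 = 0 -> subdiag_mx n.+1 s *m A_Delta F n.+1 = diag_mx (\row_i s i).
Proof.
move=> s0; apply/matrixP => i j; rewrite !mxE.
rewrite (eq_bigr (fun k : 'I_n.+1 =>
  if val k == i.-1 then (if i == j then s i else 0) else 0)).
  by rewrite big_ord_if_eqn (leq_ltn_trans (leq_pred _)) //; case: eqP.
move=> k _; rewrite !mxE -val_eqE /=.
do ![case: eqP => ?]; rewrite ?mulr1 ?mulr0 //; try lia.
by have -> : nat_of_ord i = 0%N by lia.
Qed.

Lemma A_Delta_mul_subdiag (s : nat -> F) :
  s n.+1 = 0 -> A_Delta F n.+1 *m subdiag_mx n.+1 s = diag_mx (\row_i s i.+1).
Proof.
move=> sn; apply/matrixP => i j; rewrite !mxE.
rewrite (eq_bigr (fun k : 'I_n.+1 =>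
  if val k == i.+1 then (if i == j then s i.+1 else 0) else 0)).
  rewrite big_ord_if_eqn; case: ltnP => [_|hi]; first by case: eqP.
  have -> : i.+1 = n.+1 by apply/eqP; rewrite eqn_leq hi ltn_ord.
  by rewrite sn mul0rn.
move=> k _; rewrite !mxE -val_eqE /=.
by do ![case: eqP => ?]; rewrite ?mul1r ?mul0r //; try lia; congr s.
Qed.

End ShiftCommutator.

Section PartialTrace.
Variables (F : fieldType) (n : nat) (H : 'M[F]_n).

Definition partial_trace (m : nat) : F := \sum_(k < n | (k < m)%N) H k k.

Lemma partial_trace0 : partial_trace 0 = 0.
Proof. by rewrite /partial_trace big_pred0. Qed.

Lemma partial_trace_tr : partial_trace n = \tr H.
Proof. by apply: eq_bigl => k; rewrite ltn_ord. Qed.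

Lemma partial_traceS (i : 'I_n) : partial_trace i.+1 = partial_trace i + H i i.
Proof.
rewrite /partial_trace (bigD1 i) //= addrC; congr (_ + _); apply: eq_bigl => k.
by rewrite ltnS [RHS]ltn_neqAle andbC.
Qed.

End PartialTrace.

Definition trace_subdiag_mx (F : fieldType) n (H : 'M[F]_n) : 'M[F]_n :=
  subdiag_mx n (partial_trace H).

Lemma A_Delta_commutator_trace_subdiag (F : fieldType) n (H : 'M[F]_n.+1) :
  is_diag_trace0 H ->
  A_Delta F n.+1 *m trace_subdiag_mx H - trace_subdiag_mx H *m A_Delta F n.+1 = H.
Proof.
case=> Hdiag Htr.
rewrite A_Delta_mul_subdiag ?partial_trace_tr // subdiag_mul_A_Delta ?partial_trace0 //.
apply/matrixP => i j; rewrite !mxE; case: eqP => [<-|/eqP ij].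
  by rewrite partial_traceS addrC addKr.
by rewrite subrr Hdiag.
Qed.

Lemma gauge_shift (R : comUnitRingType) n (U A D B : 'M[R]_n) :
  U \in unitmx ->
  U *m A *m invmx U + D *m invmx U = B + (U *m A + D - B *m U) *m invmx U.
Proof.
move=> hU; rewrite !mulmxDl mulNmx -[B *m U *m _]mulmxA mulmxV // mulmx1.
by rewrite [RHS]addrC subrK.
Qed.

Lemma gauge_defect_1D (R : pzRingType) n (L B H N D : 'M[R]_n) :
  B *m L - L *m B = H ->
  (1%:M + L) *m (B + H + N) + D - B *m (1%:M + L) = N + L *m (H + N) + D.
Proof.
move=> comm; rewrite -[B + H + N]addrA mulmxDl mul1mx mulmxDr mulmxDr mulmx1 -{1}comm.
move: (B *m L) (L *m B) (L *m (H + N)) => x y z.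
rewrite -[B + _ + _]addrA addrACA subrK [B + (x + _)]addrA.
by rewrite -[_ + (N + z) + D]addrA [LHS]addrC addKr.
Qed.

Theorem lemma11 (F : fieldType) (d : F -> F) (l : nat)
  (hd : is_derivation d) (hC : constants_alg_closed d) (h0 : char_zero F)
  (hl : (1 <= l)%N) (H N : 'M[F]_(l.+1))
  (hH : is_diag_trace0 H) (hN : strictly_lower N) :
  exists U : 'M[F]_(l.+1), lower_unipotent U /\
    exists N' : 'M[F]_(l.+1), strictly_lower N' /\
      U *m (A_Delta F (l.+1) + H + N) *m invmx U + map_mx d U *m invmx U
        = A_Delta F (l.+1) + N'.
Proof.
set L := trace_subdiag_mx H; set U := 1%:M + L.
have hL : strictly_lower L by exact: subdiag_mx_strictly_lower.
have hU : lower_unipotent U := lower_unipotent_1D hL.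
have dU : strictly_lower (map_mx d U).
  exact: map_derivation_lower_unipotent (derivation0 hd) (derivation1 hd) hU.
have HN_trig : is_trig_mx (H + N).
  apply/is_trig_mxP => i j ij; rewrite mxE hN ?(ltnW ij) // addr0.
  by apply: hH.1; rewrite -val_eqE /= ltn_eqF.
exists U; split=> //.
exists ((N + L *m (H + N) + map_mx d U) *m invmx U); split.
  apply: strictly_lower_mul_trig (lower_unipotent_invmx_trig hU).
  by do 2!apply: strictly_lowerD => //; exact: strictly_lower_mul_trig.
rewrite (gauge_shift _ _ (A_Delta F l.+1) (lower_unipotent_unitmx hU)).
by rewrite gauge_defect_1D // A_Delta_commutator_trace_subdiag.
Qed.
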